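(* Let $G$ be a connected cograph. Then every minimum edge separator $F$ of $G$ satisfies $|F|=\delta(G)$, where $\delta(G)$ is the minimum degree of $G$.
   Context: A cograph is a graph that can be built from single vertices by repeatedly taking disjoint unions and joins; equivalently a graph with no induced path on four vertices. For a connected graph $G$, an edge separator is a set $F\subseteq E(G)$ such that $G-F=(V(G),E(G)\setminus F)$ is disconnected; a minimum edge separator is an edge separator of least size. *)

From mathcomp Require Import all_boot.
Set Implicit Arguments. Unset Strict Implicit. Unset Printing Implicit Defensive.

Definition simple_graph (T : finType) (e : rel T) : Prop :=
  symmetric e /\ irreflexive e.

Definition edges (T : finType) (e : rel T) : {set {set T}} :=
  [set [set x; y] | x in T, y in T & e x y].

Definition connected_graph (T : finType) (e : rel T) : Prop :=
  (exists x : T, true) /\ forall x y : T, connect e x y.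

Definition remove_edges (T : finType) (e : rel T) (F : {set {set T}}) : rel T :=
  fun x y => e x y && ([set x; y] \notin F).

Definition edge_separator (T : finType) (e : rel T) (F : {set {set T}}) : Prop :=
  F \subset edges e /\ ~ connected_graph (remove_edges e F).

Definition min_edge_separator (T : finType) (e : rel T) (F : {set {set T}}) : Prop :=
  edge_separator e F /\
  forall F' : {set {set T}}, edge_separator e F' -> #|F| <= #|F'|.

Definition degree (T : finType) (e : rel T) (x : T) : nat := #|[set y | e x y]|.

(* Minimum degree; for nonempty T every degree is < #|T|, so the seed #|T| is harmless. *)
Definition min_degree (T : finType) (e : rel T) : nat :=
  \big[minn/#|T|]_(x : T) degree e x.

Definition cograph (T : finType) (e : rel T) : Prop :=
  forall a b c d : T,
    e a b -> e b c -> e c d -> ~~ e a c -> ~~ e b d -> ~~ e a d ->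
    uniq [:: a; b; c; d] -> False.

From mathcomp Require Import all_boot order zify.
Set Implicit Arguments. Unset Strict Implicit. Unset Printing Implicit Defensive.
Import Order.TTheory.

(* A shortest path of length three in a cograph would be an induced P4, so a
   connected cograph has diameter at most two.  Removing the edges at one
   vertex isolates it, so a minimum edge separator has at most δ edges.
   Conversely, a minimum separator contains the cut C between some side S and
   its complement; suppose every degree exceeds |C|.  If every vertex of S had
   a neighbour outside S, then |S| <= |C|; a vertex of S has at most |S| - 1
   neighbours inside S, hence at least |C| + 2 - |S| outside, and so
   |C| >= |S| (|C| + 2 - |S|) > |C|.  Thus S and, symmetrically, its
   complement both contain a vertex with no neighbour across the cut, and
   these two vertices are at distance at least three. *)

Section Graph.
Variables (T : finType) (e : rel T).

Lemma not_connected_graph_ex (x0 : T) :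
  ~ connected_graph e -> exists x y, ~~ connect e x y.
Proof.
move=> disc; case: (boolP [exists x, [exists y, ~~ connect e x y]]).
  by case/existsP=> x /existsP[y nxy]; exists x, y.
rewrite negb_exists => /forallP all_conn; case: disc; split=> [|x y]; first by exists x0.
by move: (all_conn x); rewrite negb_exists => /forallP/(_ y); rewrite negbK.
Qed.

Lemma min_degree_le v : min_degree e <= degree e v.
Proof. exact: (bigmin_le #|T| v (degree e)). Qed.

Lemma min_degree_eq m :
  (forall v, m <= degree e v) -> (exists v, degree e v <= m) -> min_degree e = m.
Proof.
move=> m_le [v deg_v]; apply/eqP; rewrite eqn_leq.
rewrite (leq_trans (min_degree_le v)) //=.
apply/(bigmin_geP _ m predT (degree e)); split=> [|u _]; last exact: m_le.
exact: leq_trans (m_le v) (max_card _).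
Qed.

End Graph.

Section SimpleGraph.
Variables (T : finType) (e : rel T).
Hypotheses (sym_e : symmetric e) (irr_e : irreflexive e).

Definition within2 (x y : T) := [|| x == y, e x y | [exists z, e x z && e z y]].

Lemma cograph_within2_cons a b c :
  cograph e -> e a b -> within2 b c -> within2 a c.
Proof.
move=> cog eab; rewrite /within2.
have [-> //|nac] := eqVneq a c; case eac: (e a c) => //=.
case/or3P => [/eqP bc|ebc|/existsP[z /andP[ebz ezc]]].
- by rewrite -bc eab in eac.
- by apply/existsP; exists b; rewrite eab.
case eaz: (e a z); first by apply/existsP; exists z; rewrite eaz.
case ebc: (e b c); first by apply/existsP; exists b; rewrite eab.
case: (cog a b z c eab ebz ezc (negbT eaz) (negbT ebc) (negbT eac)).
have neq_adj x y : e x y -> x != y by apply: contraTneq => ->; rewrite irr_e.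
rewrite /= !inE !negb_or nac (neq_adj _ _ eab) (neq_adj _ _ ebz) (neq_adj _ _ ezc).
by rewrite (contraFneq _ eac) 1?(contraFneq _ eac) // => [<-|->].
Qed.

Lemma cograph_connect_within2 x y :
  cograph e -> connect e x y -> within2 x y.
Proof.
move=> cog /connectP[p]; elim: p x => [|z p IH] x /=.
  by move=> _ ->; rewrite /within2 eqxx.
by case/andP=> exz pz ylast; apply: cograph_within2_cons exz (IH z pz ylast).
Qed.

Definition star (v : T) : {set {set T}} := [set [set v; z] | z in [set z | e v z]].

Lemma card_star v : #|star v| = degree e v.
Proof.
apply: card_in_imset => a b; rewrite !inE => eva evb eq_ab.
have : a \in [set v; b] by rewrite -eq_ab !inE eqxx orbT.
by rewrite !inE => /orP[/eqP av|/eqP //]; rewrite av irr_e in eva.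
Qed.

Lemma star_edge_separator v w : w != v -> edge_separator e (star v).
Proof.
move=> wv; split.
  apply/subsetP=> A /imsetP[z]; rewrite inE => evz ->.
  by apply/imset2P; exists v z; rewrite ?inE.
move=> [_ /(_ v w)/connectP[[|z p] /= vzp eq_wv]]; first by rewrite eq_wv eqxx in wv.
by move: vzp => /andP[/andP[evz /negP[]]]; apply: imset_f; rewrite inE.
Qed.

Lemma min_edge_separator_le_degree F v w :
  w != v -> min_edge_separator e F -> #|F| <= degree e v.
Proof. by move=> wv [_ Fmin]; rewrite -card_star; apply/Fmin/(star_edge_separator wv). Qed.

Section Cut.
Variable S : {set T}.

Definition out_nbhd (u : T) := [set w | (w \notin S) && e u w].

Definition cut : {set {set T}} := [set [set u; w] | u in S, w in out_nbhd u].

Lemma card_cut : #|cut| = \sum_(u in S) #|out_nbhd u|.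
Proof.
pose P := [set p : T * T | (p.1 \in S) && (p.2 \in out_nbhd p.1)].
have -> : cut = (fun p : T * T => [set p.1; p.2]) @: P.
  apply/setP=> A; apply/imset2P/imsetP=> [[u w uS wu ->]|[[u w]]].
    by exists (u, w); rewrite // inE uS.
  by rewrite inE => /andP[uS wu] ->; exists u w.
have side p : p \in P -> (p.1 \in S) && (p.2 \notin S).
  by rewrite !inE => /andP[-> /andP[-> _]].
rewrite card_in_imset; last first.
  move=> [a b] [c d] /side/andP[/= aS bS] /side/andP[/= cS dS] eq_ab.
  have : a \in [set c; d] by rewrite -eq_ab !inE eqxx.
  rewrite !inE => /orP[/eqP ac|/eqP ad]; last by rewrite -ad aS in dS.
  have : b \in [set c; d] by rewrite -eq_ab !inE eqxx orbT.
  by rewrite !inE -ac => /orP[/eqP ba|/eqP ->] //; rewrite ba aS in bS.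
under eq_bigr do rewrite -sum1_card.
by rewrite pair_big_dep sum1dep_card.
Qed.

Lemma degree_le_out_nbhd u : u \in S -> degree e u <= #|S|.-1 + #|out_nbhd u|.
Proof.
move=> uS; have nbhd_sub : [set w | e u w] \subset (S :\ u) :|: out_nbhd u.
  apply/subsetP=> w; rewrite !inE => euw; rewrite euw andbT.
  case: (w \in S); rewrite ?orbT // andbT orbF.
  by apply: contraTneq euw => ->; rewrite irr_e.
apply: leq_trans (subset_leq_card nbhd_sub) _.
by rewrite (leq_trans (leq_card_setU _ _)) // (cardsD1 u S) uS.
Qed.

Lemma cut_has_inner_vertex u0 :
  u0 \in S -> (forall v, #|cut| < degree e v) ->
  exists2 u, u \in S & forall w, e u w -> w \in S.
Proof.
move=> u0S deg_gt; case: (boolP [exists u in S, [forall w, e u w ==> (w \in S)]]).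
  by case/exists_inP=> u uS /forallP inner; exists u => // w /(implyP (inner w)).
rewrite negb_exists_in => /forall_inP no_inner.
have out_gt0 u : u \in S -> 0 < #|out_nbhd u|.
  move/no_inner; rewrite negb_forall => /existsP[w]; rewrite negb_imply => /andP[euw wS].
  by apply/card_gt0P; exists w; rewrite inE wS.
have sum_ge k : (forall u, u \in S -> k <= #|out_nbhd u|) -> #|S| * k <= #|cut|.
  by move=> k_le; rewrite card_cut -sum_nat_const; apply: leq_sum.
have s_gt0 : 0 < #|S| by apply/card_gt0P; exists u0.
have s_le_c : #|S| <= #|cut| by rewrite -[#|S|]muln1; apply: sum_ge.
have : #|S| * (#|cut|.+2 - #|S|) <= #|cut|.
  by apply: sum_ge => u uS; have := degree_le_out_nbhd uS; have := deg_gt u; lia.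
nia.
Qed.

End Cut.

Lemma cutC S : cut (~: S) = cut S.
Proof.
apply/setP=> A; apply/imset2P/imset2P=> -[u w].
  all: rewrite !inE ?negbK => uS /andP[wS euw] ->.
  by exists w u; rewrite 1?setUC // !inE ?uS // sym_e.
  by exists w u; rewrite 1?setUC // !inE ?negbK ?uS // sym_e.
Qed.

Lemma cut_component_sub F x :
  cut [set y | connect (remove_edges e F) x y] \subset F.
Proof.
apply/subsetP=> A /imset2P[u w]; rewrite !inE => xu /andP[xNw euw] ->.
apply: contraNT xNw => uwNF; apply: connect_trans xu (connect1 _).
by rewrite /remove_edges euw.
Qed.

Lemma cograph_cut_ge_degree (S : {set T}) x y :
  cograph e -> (forall x y, connect e x y) -> x \in S -> y \notin S ->
  exists v, degree e v <= #|cut S|.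
Proof.
move=> cog conn xS yS; apply/existsP/contraT; rewrite negb_exists => /forallP deg_le.
have deg_gt v : #|cut S| < degree e v by rewrite ltnNge deg_le.
have [u uS u_in] := cut_has_inner_vertex xS deg_gt.
have yCS : y \in ~: S by rewrite inE.
have [|v vS v_in] := cut_has_inner_vertex yCS; first by rewrite cutC.
have := cograph_connect_within2 cog (conn u v).
case/or3P=> [/eqP uv|/u_in|/existsP[z /andP[/u_in zS]]].
- by rewrite -uv inE uS in vS.
- by rewrite inE in vS; rewrite (negbTE vS).
- by rewrite sym_e => /v_in; rewrite inE zS.
Qed.

End SimpleGraph.

Theorem lemma6 (T : finType) (e : rel T) :
  simple_graph e -> cograph e -> connected_graph e ->
  forall F : {set {set T}}, min_edge_separator e F -> #|F| = min_degree e.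
Proof.
move=> [sym_e irr_e] cog [[x0 _] conn] F Fmin.
have [x [y xNy]] := not_connected_graph_ex x0 Fmin.1.2.
set S := [set z | connect (remove_edges e F) x z].
have xS : x \in S by rewrite inE.
have yNS : y \notin S by rewrite inE.
have [v deg_v] := cograph_cut_ge_degree sym_e irr_e cog conn xS yNS.
apply/esym/min_degree_eq => [u|]; last first.
  by exists v; apply: leq_trans deg_v (subset_leq_card (cut_component_sub _ _ _)).
have [w wu] : exists w, w != u.
  have [<-|xu] := eqVneq x u; last by exists x.
  by exists y; apply: contraNneq xNy => ->.
exact: min_edge_separator_le_degree wu Fmin.
Qed.
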